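(* Let $\mathbf A\in\mathcal S_{++}^n$, $\tau>0$, and fix $\mathbf W\in\mathbb R^{k\times n}$. Let $t\mapsto\mathbf M(t)\in\mathcal S_{++}^k$ be a continuously differentiable solution of $$\tau\tfrac{d\mathbf M}{dt}=\mathbf M^{-1}\mathbf W\mathbf A\mathbf W^\top\mathbf M^{-1}-\mathbf M.$$ Then, with $L_0(\mathbf W,\mathbf M):=\|\mathbf W\mathbf A\mathbf W^\top-\mathbf M^3\|^2$, the following identity holds: $$\tau\frac{d}{dt}L_0(\mathbf W,\mathbf M(t))=-4\big\|\mathbf M^{1/2}(\mathbf W\mathbf A\mathbf W^\top-\mathbf M^3)\mathbf M^{-1/2}\big\|^2-2L_0(\mathbf W,\mathbf M(t)),$$ where $\mathbf M=\mathbf M(t)$ on the right-hand side. In particular $\tau\frac{d}{dt}L_0\le-2L_0$, so $L_0(\mathbf W,\mathbf M(t))\le L_0(\mathbf W,\mathbf M(0))e^{-2t/\tau}$.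
   Context: Let $n>k\ge1$ be integers. $\mathcal S_{++}^m$ denotes the $m\times m$ symmetric positive definite matrices, and $\mathbf A\in\mathcal S_{++}^n$. $\|\cdot\|$ is the Frobenius norm, and $\mathbf M^{1/2}$ is the positive definite square root. *)

From HB Require Import structures.
From mathcomp Require Import all_boot all_order all_algebra.
From mathcomp Require Import all_classical all_reals all_analysis.
Set Implicit Arguments. Unset Strict Implicit. Unset Printing Implicit Defensive.
Import Order.TTheory GRing.Theory Num.Theory.
Import numFieldNormedType.Exports.
Local Open Scope ring_scope.

Definition posdef (R : realType) (m : nat) (M : 'M[R]_m) : Prop :=
  M^T = M /\ forall x : 'cV[R]_m, x != 0 -> 0 < (x^T *m M *m x) 0 0.

(* The positive definite square root M^{1/2}: the (unique, for M positive
   definite) positive definite S with S * S = M; chosen by classical choice. *)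
Definition sqrtm (R : realType) (m : nat) (M : 'M[R]_m) : 'M[R]_m :=
  xget 0 [set S : 'M[R]_m | posdef S /\ S *m S = M].

Definition frob2 (R : realType) (p q : nat) (M : 'M[R]_(p, q)) : R :=
  \sum_(i < p) \sum_(j < q) M i j ^+ 2.

Definition L0 (R : realType) (k n : nat) (A : 'M[R]_n) (W : 'M[R]_(k, n))
    (M : 'M[R]_k) : R :=
  frob2 (W *m A *m W^T - M *m M *m M).

(* Write E := W A W^T - M^3, a symmetric matrix.  The ODE reads
   tau M' = M^-1 E M^-1, hence tau (M^3)' = M^-1 E M + E + M E M^-1, and by
   cyclicity of the trace tau L0' = -2 tr (E tau (M^3)') =
   -4 tr (E M^-1 E M) - 2 L0, where tr (E M^-1 E M) = ||M^1/2 E M^-1/2||^2.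
   Thus tau L0' <= -2 L0, so t |-> L0 (M t) e^(2t/tau) is nonincreasing.
   The square root exists by the spectral theorem applied to M seen as a
   Hermitian complex matrix U^* D U; the matrix U^* D^1/2 U is real because
   U U^T commutes with D (conjugation fixes M), hence with D^1/2. *)

From HB Require Import structures.
From mathcomp Require Import all_boot all_order all_algebra.
From mathcomp Require Import all_classical all_reals all_analysis.
From mathcomp Require Import complex lra.
Import Order.TTheory GRing.Theory Num.Theory.
Import numFieldNormedType.Exports.
Local Open Scope ring_scope.
Local Open Scope classical_set_scope.

Set Implicit Arguments. Unset Strict Implicit. Unset Printing Implicit Defensive.

Lemma trmx11 (R : Type) (Z : 'M[R]_1) : Z^T = Z.
Proof. by apply/matrixP => i j; rewrite !ord1 mxE. Qed.

Lemma mxtrace_mul_tr (R : pzRingType) p q (X Y : 'M[R]_(p, q)) :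
  \tr (X *m Y^T) = \sum_i \sum_j X i j * Y i j.
Proof.
by apply: eq_bigr => i _; rewrite !mxE; apply: eq_bigr => j _; rewrite mxE.
Qed.

Lemma invmx_mul (R : comUnitRingType) k (X Y : 'M[R]_k) :
  X \in unitmx -> Y \in unitmx -> invmx (X *m Y) = invmx Y *m invmx X.
Proof.
move=> uX uY; have uXY : X *m Y \in unitmx by rewrite unitmx_mul uX.
rewrite -[RHS]mul1mx -(mulVmx uXY) -!mulmxA (mulmxA Y) mulmxV // mul1mx.
by rewrite mulmxV // mulmx1.
Qed.

Lemma diag_mx_comm_fun (R : idomainType) n (X : 'M[R]_n) (a b : 'rV[R]_n) :
    (forall i j, a 0 i = a 0 j -> b 0 i = b 0 j) ->
  X *m diag_mx a = diag_mx a *m X -> X *m diag_mx b = diag_mx b *m X.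
Proof.
move=> ab /matrixP XaC; rewrite mul_mx_diag mul_diag_mx; apply/matrixP => i j.
have := XaC i j; rewrite mul_mx_diag mul_diag_mx !mxE [X i j * _]mulrC.
have [->|Xij_neq0] := eqVneq (X i j) 0; first by rewrite !(mulr0, mul0r).
by move=> /(mulIf Xij_neq0) /ab ->; rewrite mulrC.
Qed.

Section HermitianSqrt.
Variable C : numClosedFieldType.
Local Open Scope sesquilinear_scope.

Definition hposdef n (A : 'M[C]_n) : Prop :=
  A \is hermsymmx /\ forall v : 'rV[C]_n, v != 0 -> 0 < (v *m A *m v^t*) 0 0.

Lemma hermsymmxP n (A : 'M[C]_n) : reflect (A^t* = A) (A \is hermsymmx).
Proof. by rewrite is_hermitianmxE expr0 scale1r eq_sym; apply: eqP. Qed.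

Variable n : nat.
Implicit Types A : 'M[C]_n.

Local Notation P A := (spectralmx A).
Local Notation D A := (spectral_diag A).

Lemma hposdef_spectral A : hposdef A -> A = (P A)^t* *m diag_mx (D A) *m P A.
Proof.
case=> /hermitian_normalmx/orthomx_spectralP hA _.
by rewrite -invmx_unitary ?spectral_unitarymx.
Qed.

Lemma unitarymx_trCmul (U : 'M[C]_n) : U \is unitarymx -> U^t* *m U = 1%:M.
Proof. by move=> Uu; rewrite -invmx_unitary // mulVmx // unitarymx_unit. Qed.

Lemma mulmx_form_entry m p A (X : 'M[C]_(m, n)) (Y : 'M[C]_(p, n)) i j :
  (X *m A *m Y^t*) i j = (row i X *m A *m (row j Y)^t*) 0 0.
Proof. by rewrite -!row_mul !mxE; apply: eq_bigr => k _; rewrite !mxE. Qed.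

Lemma unitarymx_row_neq0 (U : 'M[C]_n) j : U \is unitarymx -> row j U != 0.
Proof.
move=> /unitarymxP/(congr1 (fun X : 'M[C]_n => X j j)).
rewrite -[U in U *m _]mulmx1 mulmx_form_entry [1%:M _ _]mxE eqxx.
apply: contra_eq_neq => ->.
by rewrite !mul0mx mxE eq_sym oner_eq0.
Qed.

Lemma hposdef_spectral_diag_gt0 A j : hposdef A -> 0 < D A 0 j.
Proof.
move=> hA; have Pu := spectral_unitarymx A.
have PAP : P A *m A *m (P A)^t* = diag_mx (D A).
  rewrite {2}(hposdef_spectral hA) !mulmxA (unitarymxP Pu) mul1mx.
  by rewrite mulmxtVK.
have := congr1 (fun X : 'M[C]_n => X j j) PAP.
rewrite mulmx_form_entry [diag_mx _ _ _]mxE eqxx mulr1n.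
by move=> <-; apply: hA.2; apply: unitarymx_row_neq0.
Qed.

Lemma diag_form_gt0 (e w : 'rV[C]_n) :
  (forall j, 0 < e 0 j) -> w != 0 -> 0 < (w *m diag_mx e *m w^t*) 0 0.
Proof.
move=> e_gt0 w_neq0; have [j wj_neq0] : exists j, w 0 j != 0.
  apply/existsP; apply: contraR w_neq0; rewrite negb_exists => /forallP w0.
  by apply/eqP/rowP => j; rewrite mxE; apply/eqP/negPn.
have term_ge0 i : 0 <= (w *m diag_mx e) 0 i * (w^t*) i 0.
  by rewrite mul_mx_diag !mxE mulrAC mulr_ge0 ?mul_conjC_ge0 ?ltW.
rewrite mxE (bigD1 j) //= ltr_wpDr ?sumr_ge0 // mul_mx_diag !mxE mulrAC.
by rewrite mulr_gt0 ?mul_conjC_gt0.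
Qed.

Definition hsqrtm A : 'M[C]_n :=
  (P A)^t* *m diag_mx (map_mx sqrtC (D A)) *m P A.

Lemma hsqrtmK A : hposdef A -> hsqrtm A *m hsqrtm A = A.
Proof.
move=> hA; rewrite [RHS]hposdef_spectral //.
have EE : diag_mx (map_mx sqrtC (D A)) *m diag_mx (map_mx sqrtC (D A)) =
    diag_mx (D A).
  by rewrite mul_diag_mx; apply/matrixP => i j; rewrite !mxE mulrnAr -expr2 sqrtCK.
rewrite /hsqrtm -!mulmxA (mulmxA (P A)) (unitarymxP (spectral_unitarymx A)).
by rewrite mul1mx !mulmxA -(mulmxA ((P A)^t*)) EE.
Qed.

Lemma hposdef_hsqrtm A : hposdef A -> hposdef (hsqrtm A).
Proof.
move=> hA; have Pu := spectral_unitarymx A.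
set e := map_mx sqrtC (D A).
have e_gt0 j : 0 < e 0 j by rewrite mxE sqrtC_gt0 hposdef_spectral_diag_gt0.
have eC : (diag_mx e)^t* = diag_mx e.
  rewrite tr_diag_mx map_diag_mx realmxC //.
  by apply/mxOverP => i j; apply/gtr0_real; rewrite (ord1 i).
split.
  by apply/hermsymmxP; rewrite /hsqrtm !trmx_mul !map_mxM trmxCK eC mulmxA.
move=> v v_neq0; pose w := v *m (P A)^t*.
have -> : v *m hsqrtm A *m v^t* = w *m diag_mx e *m w^t*.
  by rewrite /hsqrtm /w trmx_mul map_mxM trmxCK !mulmxA.
apply: diag_form_gt0 => //; apply: contra_neq v_neq0 => w0.
by rewrite -[v]mulmx1 -(unitarymx_trCmul Pu) mulmxA -/w w0 mul0mx.
Qed.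

Lemma unitary_diag_conj_fun (U : 'M[C]_n) (d e : 'rV[C]_n) :
    U \is unitarymx -> d \is a realmx -> e \is a realmx ->
    (forall i j, d 0 i = d 0 j -> e 0 i = e 0 j) ->
  map_mx Num.conj (U^t* *m diag_mx d *m U) = U^t* *m diag_mx d *m U ->
  map_mx Num.conj (U^t* *m diag_mx e *m U) = U^t* *m diag_mx e *m U.
Proof.
move=> Uu dR eR de AC; set Uc := map_mx Num.conj U.
have UtC : map_mx Num.conj (U^t*) = U^T.
  by rewrite -map_mx_comp (map_mx_id (@conjCK _)).
have UcUt : Uc *m U^T = 1%:M by rewrite -UtC -map_mxM (unitarymxP Uu) map_mx1.
have UtUc : U^T *m Uc = 1%:M by rewrite -UtC -map_mxM (unitarymx_trCmul Uu) map_mx1.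
have conjE (f : 'rV[C]_n) : f \is a realmx ->
    map_mx Num.conj (U^t* *m diag_mx f *m U) = U^T *m diag_mx f *m Uc.
  by move=> fR; rewrite !map_mxM UtC map_diag_mx realmxC.
pose X := U *m U^T.
have XD : X *m diag_mx d = diag_mx d *m X.
  have := congr1 (fun Y => U *m Y *m U^T) AC; rewrite conjE //.
  rewrite !mulmxA (unitarymxP Uu) mul1mx -(mulmxA _ Uc) UcUt mulmx1 => <-.
  by rewrite /X -!mulmxA.
have XE := diag_mx_comm_fun de XD.
rewrite conjE // -[RHS]mulmx1 -UtUc !mulmxA -(mulmxA _ U) -/X -(mulmxA (U^t*)) -XE.
by rewrite /X !mulmxA (unitarymx_trCmul Uu) mul1mx.
Qed.

Lemma hsqrtm_conj A : hposdef A -> map_mx Num.conj A = A ->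
  map_mx Num.conj (hsqrtm A) = hsqrtm A.
Proof.
move=> hA AC; apply: (unitary_diag_conj_fun (d := D A) (spectral_unitarymx A)).
- by apply: hermitian_spectral_diag_real; case: hA.
- apply/mxOverP => i j; rewrite mxE (ord1 i); apply/gtr0_real.
  by rewrite sqrtC_gt0 hposdef_spectral_diag_gt0.
- by move=> i j; rewrite !mxE => ->.
- by rewrite -hposdef_spectral.
Qed.

End HermitianSqrt.

Section RealPosdef.
Variable R : realType.
Local Open Scope sesquilinear_scope.
Local Notation rc := (real_complex R).

Lemma map_conj_real_complex m p (X : 'M[R]_(m, p)) :
  map_mx Num.conj (map_mx rc X) = map_mx rc X.
Proof. by apply/matrixP => i j; rewrite !mxE; exact: conjc_real. Qed.

Lemma posdef_hposdef k (M : 'M[R]_k) : posdef M -> hposdef (map_mx rc M).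
Proof.
case=> sM pM; split.
  by apply/hermsymmxP; rewrite map_trmx map_conj_real_complex sM.
have form_rc (x y : 'rV[R]_k) :
    map_mx rc x *m map_mx rc M *m (map_mx rc y)^T = map_mx rc (x *m M *m y^T).
  by rewrite !map_mxM map_trmx.
have form_sym (x y : 'rV[R]_k) : y *m M *m x^T = x *m M *m y^T.
  by rewrite -[LHS]trmx11 !trmx_mul trmxK sM mulmxA.
move=> v v_neq0.
pose x := map_mx (@complex.Re R) v; pose y := map_mx (@complex.Im R) v.
(* With v = x + i y, the cross terms cancel because M is symmetric. *)
have vE : v = map_mx rc x + 'i *: map_mx rc y.
  by apply/rowP => j; rewrite !mxE complexRe complexIm -Crect.
have vtE : v^t* = (map_mx rc x)^T - 'i *: (map_mx rc y)^T.
  rewrite vE linearD linearZ /= map_mxD map_mxZ /= conjCi scaleNr -!map_trmx.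
  by rewrite !map_conj_real_complex.
rewrite vtE [in X in X *m _]vE mulmxBr !mulmxDl -!scalemxAl -!scalemxAr !form_rc.
rewrite form_sym addrKA scalerA -expr2 sqrCi scaleN1r opprK -map_mxD mxE ltcR mxE.
have form_gt0 (z : 'rV[R]_k) : z != 0 -> 0 < (z *m M *m z^T) 0 0.
  by move=> z_neq0; have := pM z^T; rewrite trmxK trmx_eq0 => ->.
have form_ge0 (z : 'rV[R]_k) : 0 <= (z *m M *m z^T) 0 0.
  have [->|/form_gt0/ltW //] := eqVneq z 0.
  by rewrite !mul0mx mxE.
have [x0|/form_gt0 x_gt0] := eqVneq x 0; last by have := form_ge0 y; lra.
have [y0|/form_gt0 y_gt0] := eqVneq y 0; last by have := form_ge0 x; lra.
by move: v_neq0; rewrite vE x0 y0 !map_mx0 scaler0 addr0 eqxx.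
Qed.

Lemma hposdef_posdef k (S : 'M[R]_k) : hposdef (map_mx rc S) -> posdef S.
Proof.
case=> /hermsymmxP hS pS; split.
  by apply: (map_mx_inj (f := rc)); rewrite -hS map_trmx map_conj_real_complex.
move=> x x_neq0; have := pS (map_mx rc x)^T.
rewrite trmx_eq0 map_mx_eq0 x_neq0 trmxK map_conj_real_complex map_trmx.
by rewrite -!map_mxM mxE ltcR; apply.
Qed.

Lemma conj_fixed_mx_Re m p (Z : 'M[R[i]]_(m, p)) :
  map_mx Num.conj Z = Z -> map_mx rc (map_mx (@complex.Re R) Z) = Z.
Proof.
move=> /matrixP ZC; apply/matrixP => i j; rewrite !mxE RRe_real //.
by apply/CrealP; have := ZC i j; rewrite mxE.
Qed.

Lemma posdef_sqrtm k (M : 'M[R]_k) : posdef M ->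
  posdef (sqrtm M) /\ sqrtm M *m sqrtm M = M.
Proof.
move=> pM; have hM := posdef_hposdef pM.
pose S := map_mx (@complex.Re R) (hsqrtm (map_mx rc M)).
have SE : map_mx rc S = hsqrtm (map_mx rc M).
  by apply: conj_fixed_mx_Re; apply: hsqrtm_conj => //; exact: map_conj_real_complex.
suff : [set S : 'M[R]_k | posdef S /\ S *m S = M] (sqrtm M) by [].
apply: xgetPex; exists S; split.
  by apply: hposdef_posdef; rewrite SE; exact: hposdef_hsqrtm.
by apply: (map_mx_inj (f := rc)); rewrite map_mxM SE hsqrtmK.
Qed.

Lemma posdef_unit k (M : 'M[R]_k) : posdef M -> M \in unitmx.
Proof.
case=> _ pM; rewrite -row_free_unit -kermx_eq0; apply: contraT => ker_neq0.
have [i ker_i] : exists i, row i (kermx M) != 0.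
  apply/existsP; apply: contraR ker_neq0; rewrite negb_exists => /forallP ker0.
  by apply/eqP/row_matrixP => i; rewrite row0; apply/eqP/negPn.
have := pM (row i (kermx M))^T; rewrite trmx_eq0 => /(_ ker_i).
by rewrite trmxK -row_mul mulmx_ker row0 mul0mx mxE ltxx.
Qed.

End RealPosdef.

Section Frobenius.
Variable R : realType.

Lemma frob2_tr p q (X : 'M[R]_(p, q)) : frob2 X = \tr (X *m X^T).
Proof.
by rewrite mxtrace_mul_tr; apply: eq_bigr => i _; apply: eq_bigr => j _; rewrite expr2.
Qed.

Lemma frob2_ge0 p q (X : 'M[R]_(p, q)) : 0 <= frob2 X.
Proof. by apply: sumr_ge0 => i _; apply: sumr_ge0 => j _; exact: sqr_ge0. Qed.

Lemma frob2_conjmx_sym k (S E : 'M[R]_k) : S \in unitmx -> S^T = S -> E^T = E ->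
  frob2 (S *m E *m invmx S) = \tr (E *m invmx (S *m S) *m E *m (S *m S)).
Proof.
move=> uS sS sE; rewrite frob2_tr !trmx_mul trmx_inv sS sE invmx_mul //.
by rewrite -!mulmxA mxtrace_mulC !mulmxA.
Qed.

End Frobenius.

Section CubeDerivative.
Variables (R : comUnitRingType) (k : nat).
Implicit Types M D E : 'M[R]_k.

Lemma scale_cube_derivative (tau : R) M D E : M \in unitmx ->
    tau *: D = invmx M *m E *m invmx M ->
  tau *: (D *m M *m M + M *m D *m M + M *m M *m D) =
    invmx M *m E *m M + E + M *m E *m invmx M.
Proof.
move=> uM tauD; rewrite !scalerDr; congr (_ + _ + _).
- by rewrite !scalemxAl tauD -(mulmxA _ (invmx M)) mulVmx // mulmx1.
- rewrite scalemxAl scalemxAr tauD !mulmxA mulmxV // mul1mx.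
  by rewrite -mulmxA mulVmx // mulmx1.
- by rewrite scalemxAr tauD !mulmxA -(mulmxA M M) mulmxV // mulmx1.
Qed.

Lemma trace_cube_derivative M E : M \in unitmx -> M^T = M -> E^T = E ->
  \tr (E *m (invmx M *m E *m M + E + M *m E *m invmx M)^T) =
    \tr (E *m invmx M *m E *m M) *+ 2 + \tr (E *m E^T).
Proof.
move=> uM sM sE; have siM : (invmx M)^T = invmx M by rewrite trmx_inv sM.
rewrite !linearD /= !trmx_mul sM siM sE.
have -> : \tr (E *m (M *m (E *m invmx M))) = \tr (E *m invmx M *m E *m M).
  by rewrite !mulmxA -(mulmxA (E *m M)) mxtrace_mulC !mulmxA.
by rewrite !mulmxA addrAC mulr2n.
Qed.

End CubeDerivative.

Section MatrixDerivative.
Variable R : realFieldType.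
Implicit Types t : R.

Lemma is_derive_sumr n (h : 'I_n -> R -> R) t (dh : 'I_n -> R) :
  (forall i, is_derive t 1 (h i) (dh i)) ->
  is_derive t 1 (fun s => \sum_(i < n) h i s) (\sum_(i < n) dh i).
Proof. by rewrite -fct_sumE; exact: is_derive_sum. Qed.

Lemma is_derive_mxE p q (f : R -> 'M[R]_(p, q)) t (df : 'M[R]_(p, q)) :
  is_derive t 1 f df <-> forall i j, is_derive t 1 (fun s => f s i j) (df i j).
Proof.
split=> [[f_der <-] i j|dfij].
  have fij_der := (derivable_mxP f t 1).1 f_der i j.
  by apply: DeriveDef => //; rewrite derive_mx // mxE.
have f_der : derivable f t 1 by apply/derivable_mxP => i j; have [] := dfij i j.
apply: DeriveDef => //; rewrite derive_mx //; apply/matrixP => i j.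
by rewrite mxE; have [_ ->] := dfij i j.
Qed.

Lemma is_derive_mulmx p q r (f : R -> 'M[R]_(p, q)) (g : R -> 'M[R]_(q, r))
    t df dg :
  is_derive t 1 f df -> is_derive t 1 g dg ->
  is_derive t 1 (fun s => f s *m g s) (df *m g t + f t *m dg).
Proof.
move=> /is_derive_mxE f_der /is_derive_mxE g_der; apply/is_derive_mxE => i j.
under [fun s => _]funext do rewrite mxE.
rewrite !mxE -big_split; apply: is_derive_sumr => l /=.
rewrite addrC [df i l * _]mulrC; exact: is_deriveM.
Qed.

Lemma is_derive_cube k (M : R -> 'M[R]_k) t dM : is_derive t 1 M dM ->
  is_derive t 1 (fun s => M s *m M s *m M s)
    (dM *m M t *m M t + M t *m dM *m M t + M t *m M t *m dM).
Proof.
move=> M_der; have := is_derive_mulmx (is_derive_mulmx M_der M_der) M_der.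
by rewrite mulmxDl.
Qed.

End MatrixDerivative.

Lemma is_derive_frob2 (R : realType) p q (F : R -> 'M[R]_(p, q)) (t : R) dF :
  is_derive t 1 F dF ->
  is_derive t 1 (fun s => frob2 (F s)) (2 * \tr (F t *m dF^T)).
Proof.
move=> /is_derive_mxE F_der; rewrite mxtrace_mul_tr mulr_sumr.
apply: is_derive_sumr => i; rewrite mulr_sumr.
apply: is_derive_sumr => j /=.
by have := is_deriveX 2 (F_der i j); rewrite expr1 mulrA.
Qed.

Section EntrywiseContinuity.
Variables (R : realType) (T : topologicalType) (x : T).

Definition entrywise_continuous_at p q (F : T -> 'M[R]_(p, q)) :=
  forall i j, {for x, continuous (fun s => F s i j)}.

Lemma continuous_sumr n (f : 'I_n -> T -> R) :
  (forall i, {for x, continuous (f i)}) ->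
  {for x, continuous (fun s => \sum_(i < n) f i s)}.
Proof.
elim: n f => [|n IHn] f f_cont.
  rewrite (_ : (fun s => _) = cst 0); first exact: cst_continuous.
  by apply/funext => s; rewrite big_ord0.
rewrite (_ : (fun s => _) =
    (fun s => \sum_(i < n) f (widen_ord (leqnSn n) i) s) + f ord_max).
  by apply: continuousD => //; apply: IHn.
by apply/funext => s; rewrite big_ord_recr.
Qed.

Lemma entrywise_continuous_mulmx p q r
    (F : T -> 'M[R]_(p, q)) (G : T -> 'M[R]_(q, r)) :
  entrywise_continuous_at F -> entrywise_continuous_at G ->
  entrywise_continuous_at (fun s => F s *m G s).
Proof.
move=> F_cont G_cont i j.
rewrite (_ : (fun s => _) = (fun s => \sum_l F s i l * G s l j)).
  by apply: continuous_sumr => l; apply: continuousM.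
by apply/funext => s; rewrite mxE.
Qed.

Lemma entrywise_continuous_subl p q (B : 'M[R]_(p, q)) (F : T -> 'M[R]_(p, q)) :
  entrywise_continuous_at F -> entrywise_continuous_at (fun s => B - F s).
Proof.
move=> F_cont i j; rewrite (_ : (fun s => _) = cst (B i j) - (fun s => F s i j)).
  by apply: continuousB => //; exact: cst_continuous.
by apply/funext => s; rewrite !mxE.
Qed.

Lemma continuous_frob2 p q (F : T -> 'M[R]_(p, q)) :
  entrywise_continuous_at F -> {for x, continuous (fun s => frob2 (F s))}.
Proof.
move=> F_cont; apply: continuous_sumr => i; apply: continuous_sumr => j.
rewrite (_ : (fun s => _) = (fun s => F s i j) \* (fun s => F s i j)).
  exact: continuousM.
by apply/funext => s; rewrite expr2.
Qed.

End EntrywiseContinuity.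

Lemma continuous_L0 (R : realType) k n (A : 'M[R]_n) (W : 'M[R]_(k, n)) :
  continuous (L0 A W).
Proof.
move=> X; have X_cont : entrywise_continuous_at X (@id 'M[R]_k).
  by move=> i j; exact: coord_continuous.
exact: (continuous_frob2 (entrywise_continuous_subl (B := W *m A *m W^T)
  (entrywise_continuous_mulmx (entrywise_continuous_mulmx X_cont X_cont) X_cont))).
Qed.

Section Dissipation.
Variable R : realType.

Lemma is_derive_L0 k n (A : 'M[R]_n) (W : 'M[R]_(k, n)) (M : R -> 'M[R]_k)
    (t : R) dM :
  is_derive t 1 M dM ->
  is_derive t 1 (fun s => L0 A W (M s))
    (- 2 * \tr ((W *m A *m W^T - M t *m M t *m M t) *m
                (dM *m M t *m M t + M t *m dM *m M t + M t *m M t *m dM)^T)).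
Proof.
move=> M_der; have := is_derive_frob2 (is_deriveB (is_derive_cst (W *m A *m W^T) t 1)
  (is_derive_cube M_der)).
by rewrite sub0r linearN /= mulmxN linearN /= mulrN -mulNr.
Qed.

Lemma L0_dissipation k (B M dM : 'M[R]_k) (tau : R) : posdef M -> B^T = B ->
    tau *: dM = invmx M *m B *m invmx M - M ->
  tau * (- 2 * \tr ((B - M *m M *m M) *m
                    (dM *m M *m M + M *m dM *m M + M *m M *m dM)^T)) =
  - 4 * frob2 (sqrtm M *m (B - M *m M *m M) *m invmx (sqrtm M))
  - 2 * frob2 (B - M *m M *m M).
Proof.
move=> pM sB ODE; have uM := posdef_unit pM; have [pS SS] := posdef_sqrtm pM.
have sM : M^T = M by case: pM.
set E := B - M *m M *m M.
have sE : E^T = E by rewrite /E linearB /= sB !trmx_mul sM mulmxA.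
have tau_dM : tau *: dM = invmx M *m E *m invmx M.
  rewrite ODE /E mulmxBr mulmxBl; congr (_ - _).
  by rewrite !mulmxA mulVmx // mul1mx -!mulmxA mulmxV // mulmx1.
set X := dM *m M *m M + M *m dM *m M + M *m M *m dM.
have -> : tau * (- 2 * \tr (E *m X^T)) = - 2 * \tr (E *m (tau *: X)^T).
  by rewrite linearZ /= -scalemxAr mxtraceZ mulrCA.
rewrite /X (scale_cube_derivative uM tau_dM).
rewrite (trace_cube_derivative uM sM sE) frob2_conjmx_sym ?SS -?frob2_tr //.
- by rewrite mulrDr mulr2n; lra.
- exact: posdef_unit pS.
- by case: pS.
Qed.

Lemma L0_rate k n (A : 'M[R]_n) (W : 'M[R]_(k, n)) (M : R -> 'M[R]_k)
    (tau t : R) :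
    A^T = A -> posdef (M t) -> derivable M t 1 ->
    tau *: derive1 M t = invmx (M t) *m (W *m A *m W^T) *m invmx (M t) - M t ->
  derivable (fun s => L0 A W (M s)) t 1 /\
  tau * derive1 (fun s => L0 A W (M s)) t =
    - 4 * frob2 (sqrtm (M t) *m (W *m A *m W^T - M t *m M t *m M t)
                   *m invmx (sqrtm (M t)))
    - 2 * L0 A W (M t).
Proof.
move=> sA pMt /derivableP M_der ODE; have [L0_der L0'] := is_derive_L0 A W M_der.
split=> //; rewrite derive1E L0' L0_dissipation // -?derive1E //.
by rewrite !trmx_mul trmxK sA mulmxA.
Qed.

End Dissipation.

Section Decay.
Variable R : realType.

Lemma is_derive_expRMl (a t : R) :
  is_derive t 1 (fun s => expR (a * s)) (expR (a * t) * a).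
Proof.
have lin : is_derive t 1 (a \*: id) a.
  exact: is_derive_eq (is_deriveZ a (is_derive_id t (1 : R))) (mulr1 a).
exact: is_derive1_comp (is_derive_expR _) lin.
Qed.

Lemma le_expR_decay (f : R -> R) (a : R) :
    {within `[0, +oo[, continuous f} -> (forall t, 0 < t -> derivable f t 1) ->
    (forall t, 0 < t -> f^`() t <= - a * f t) ->
  forall t, 0 <= t -> f t <= f 0 * expR (- a * t).
Proof.
move=> f_cont f_der f'_le t t_ge0.
pose h s := f s * expR (a * s).
have h_der (s : R) : 0 < s ->
    is_derive s 1 h (derive1 f s * expR (a * s) + f s * (expR (a * s) * a)).
  move=> s_gt0; rewrite derive1E.
  have := is_deriveM (derivableP (f_der s s_gt0)) (is_derive_expRMl a s).
  by rewrite addrC [_ *: _]mulrC.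
have h'_le0 s : s \in `]0, +oo[%R -> h^`() s <= 0.
  rewrite in_itv /= andbT => s_gt0; rewrite derive1E; have [_ ->] := h_der s s_gt0.
  have := f'_le s s_gt0; have := expR_gt0 (a * s); nra.
have h_cont : {within `[0, +oo[, continuous h}.
  move=> s; apply: cvgM; first exact: f_cont.
  apply: continuous_subspaceT => {}s; apply: differentiable_continuous.
  by apply/derivable1_diffP; have [] := is_derive_expRMl a s.
have h_derivable (s : R) : s \in `]0, +oo[%R -> derivable h s 1.
  by rewrite in_itv /= andbT => /h_der [].
have := ler0_derive1_nincry h_derivable h'_le0 h_cont (lexx 0) t_ge0.
rewrite /h mulr0 expR0 mulr1 mulNr expRN => h_le.
by rewrite ler_pdivlMr ?expR_gt0.
Qed.

End Decay.

Theorem mainTheorem10 (R : realType) (n k : nat) (hk : (1 <= k)%N) (hkn : (k < n)%N)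
  (A : 'M[R]_n) (hA : posdef A) (tau : R) (htau : 0 < tau) (W : 'M[R]_(k, n))
  (M : R -> 'M[R]_k)
  (hMpd : forall t, 0 <= t -> posdef (M t))
  (hMcont : {within `[0, +oo[, continuous M})
  (hMder : forall t, 0 < t -> derivable M t 1)
  (hMC1 : {in `]0, +oo[, continuous (derive1 M)})
  (hODE : forall t, 0 < t ->
     tau *: (derive1 M t) = invmx (M t) *m (W *m A *m W^T) *m invmx (M t) - M t) :
  (forall t, 0 < t ->
     derivable (fun s => L0 A W (M s)) t 1 /\
     tau * derive1 (fun s => L0 A W (M s)) t =
       - 4 * frob2 (sqrtm (M t) *m (W *m A *m W^T - M t *m M t *m M t)
                      *m invmx (sqrtm (M t)))
       - 2 * L0 A W (M t)) /\
  (forall t, 0 < t -> tau * derive1 (fun s => L0 A W (M s)) t <= - 2 * L0 A W (M t)) /\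
  (forall t, 0 <= t -> L0 A W (M t) <= L0 A W (M 0) * expR (- (2 * t) / tau)).
Proof.
have rate (t : R) (t_gt0 : 0 < t) :=
  L0_rate (proj1 hA) (hMpd t (ltW t_gt0)) (hMder t t_gt0) (hODE t t_gt0).
have rate_le (t : R) : 0 < t ->
    tau * derive1 (fun s => L0 A W (M s)) t <= - 2 * L0 A W (M t).
  move=> /rate[_ ->].
  have := frob2_ge0 (sqrtm (M t) *m (W *m A *m W^T - M t *m M t *m M t)
                       *m invmx (sqrtm (M t))); lra.
split; first exact: rate.
split=> // t t_ge0.
have -> : - (2 * t) / tau = - (2 / tau) * t by rewrite !mulNr mulrAC.
apply: (le_expR_decay (f := fun s => L0 A W (M s))) => //.
- by move=> s; exact: continuous_comp (hMcont s) (@continuous_L0 _ _ _ A W (M s)).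
- by move=> s /rate[].
- move=> s s_gt0; rewrite -(ler_pM2l htau) mulrA mulrN mulrCA mulfV ?gt_eqF //.
  by rewrite mulr1; exact: rate_le.
Qed.
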